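(* Let $L\ge1$, $\alpha\in(\alpha_{L+1},\alpha_L)$ and $K\in\{0,1,\dots,L+1\}$. Then the system $(E_K)$ together with the extra condition $l_{K+2}=0$ has a unique solution $(l_0,\dots,l_{K+2})$, given by $$l_j=\frac{\sin\big(\frac{K+2-j}{2}\omega\big)\sin\big(\frac{j\omega}{2}\big)}{Z},\quad j\in\{0,\dots,K+2\},\qquad Z:=\sum_{i=1}^{K+1}\sin\big(\tfrac{K+2-i}{2}\omega\big)\sin\big(\tfrac{i\omega}{2}\big),$$ and it satisfies $$d_0=-d_{K+1}=-\alpha\,\frac{\sin\big(\frac{K+3}{2}\omega\big)\sin\big(\frac{\omega}{2}\big)}{Z}.$$ Moreover $l_1,\dots,l_{K+1}>0$, and $d_0<0$ if $K\in\{0,\dots,L-1\}$, while $d_0>0$ if $K\in\{L,L+1\}$. Finally, the two displayed formulas also hold when $\alpha=\alpha_L$ and $K\in\{1,\dots,L-1\}$.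
   Context: Define $\alpha_1:=+\infty$ and, for $L\ge2$, $\alpha_L:=\dfrac{1}{1+2\cos(\frac{2\pi}{L+2})}$. For $\alpha>1/3$, let $\omega\in(0,\pi)$ be the unique real with $\cos\omega=\frac{1-\alpha}{2\alpha}$ (so $\alpha\in(\alpha_{L+1},\alpha_L)$ iff $\frac{2\pi}{L+3}<\omega<\frac{2\pi}{L+2}$). For an integer $K\ge0$ and a real vector $(l_0,\dots,l_{K+2})$, set $d_0:=l_0-l_1+\alpha l_2$, $d_j:=-\alpha l_{j-1}+l_j-l_{j+1}+\alpha l_{j+2}$ for $j\in\{1,\dots,K\}$, and $d_{K+1}:=-\alpha l_K+l_{K+1}-l_{K+2}$. The system $(E_K)$ is: $d_1=\dots=d_K=0$, $l_0=0$, and $\sum_{j=1}^{K+1}l_j=1$. *)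

From Stdlib Require Import Reals Lra Lia.
Open Scope R_scope.

(* alpha_L := 1 / (1 + 2 cos(2 pi / (L+2))), meaningful for L >= 2
   (alpha_1 = +infinity is handled in [alpha_band]). *)
Definition alphaL (L : nat) : R := 1 / (1 + 2 * cos (2 * PI / INR (L + 2))).

(* alpha in the open interval (alpha_{L+1}, alpha_L), with alpha_1 = +oo. *)
Definition alpha_band (L : nat) (a : R) : Prop :=
  alphaL (S L) < a /\ ((2 <= L)%nat -> a < alphaL L).

Definition dcoef (a : R) (K : nat) (l : nat -> R) (j : nat) : R :=
  if Nat.eqb j 0 then l 0%nat - l 1%nat + a * l 2%nat
  else if Nat.eqb j (S K) then - a * l K + l (S K) - l (S (S K))
  else - a * l (j - 1)%nat + l j - l (S j) + a * l (S (S j)).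

(* The system (E_K) together with l_{K+2} = 0;
   sum_{j=1}^{K+1} l_j = sum_f_R0 (fun i => l (i+1)) K. *)
Definition system_EK0 (a : R) (K : nat) (l : nat -> R) : Prop :=
  (forall j : nat, (1 <= j <= K)%nat -> dcoef a K l j = 0) /\
  l 0%nat = 0 /\
  sum_f_R0 (fun i => l (S i)) K = 1 /\
  l (K + 2)%nat = 0.

Definition Zc (w : R) (K : nat) : R :=
  sum_f_R0 (fun i => sin ((INR (K + 2) - INR (S i)) / 2 * w) * sin (INR (S i) * w / 2)) K.

Definition lsol (w : R) (K : nat) (j : nat) : R :=
  sin ((INR (K + 2) - INR j) / 2 * w) * sin (INR j * w / 2) / Zc w K.

From Stdlib Require Import Reals Lra Lia.
Open Scope R_scope.

(* Put theta = (K+2) w / 2.  The interior equations d_1 = ... = d_K = 0 form a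
   four-term linear recurrence whose characteristic polynomial
   a x^3 - x^2 + x - a = (x - 1)(a x^2 + (a - 1) x + a) has the roots 1 and
   e^{+-i w}, because cos w = (1 - a)/(2a).  Hence every "harmonic" sequence
   j |-> c + k cos(phi - j w) solves it, and since a <> 0 a solution is
   determined by its first three terms.
   The numerator sin((K+2-j) w/2) sin(j w/2) of [lsol] equals
   (cos(theta - j w) - cos theta)/2, a harmonic sequence vanishing at j = 0 and
   j = K+2; a second harmonic sequence F vanishes at j = 0, 1.  Any solution l
   of (E_K) with l_{K+2} = 0 is thus t (numerator) + c F, and c = 0 because
   F_{K+2} <> 0, while the normalisation fixes t.  The boundary values d_0,
   d_{K+1} follow from the symmetry j <-> K+2-j and one more use of the
   recurrence at j = 0.  Positivity and all signs reduce to the position of the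
   multiples of w/2 in (0, 2 pi), which the bounds on a locate:
   2 pi/(L+3) < w < 2 pi/(L+2) in the open band, w = 2 pi/(L+2) at a = alpha_L. *)

Definition rec (a : R) (l : nat -> R) (j : nat) : R :=
  - a * l (j - 1)%nat + l j - l (S j) + a * l (S (S j)).

Lemma rec_lin a p q t c j :
  rec a (fun i => t * p i + c * q i) j = t * rec a p j + c * rec a q j.
Proof. unfold rec. ring. Qed.

Lemma rec_determined (a : R) (K : nat) (p q : nat -> R) : a <> 0 ->
  (forall j, (1 <= j <= K)%nat -> rec a p j = 0) ->
  (forall j, (1 <= j <= K)%nat -> rec a q j = 0) ->
  p 0%nat = q 0%nat -> p 1%nat = q 1%nat -> p 2%nat = q 2%nat ->
  forall j, (j <= K + 2)%nat -> p j = q j.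
Proof.
intros Ha Hp Hq H0 H1 H2.
assert (Hupto : forall n j, (j <= n)%nat -> (j <= K + 2)%nat -> p j = q j).
{ induction n as [|n IH]; intros j Hj HjK.
  - replace j with 0%nat by lia; exact H0.
  - destruct (Nat.le_gt_cases j n) as [h|h]; [apply IH; lia|].
    replace j with (S n) by lia.
    destruct n as [|[|n]]; [exact H1|exact H2|].
    pose proof (Hp (S n) ltac:(lia)) as Ep. pose proof (Hq (S n) ltac:(lia)) as Eq.
    unfold rec in Ep, Eq. replace (S n - 1)%nat with n in Ep, Eq by lia.
    rewrite (IH n), (IH (S n)), (IH (S (S n))) in Ep by lia.
    apply (Rmult_eq_reg_l a); lra. }
intros j Hj. exact (Hupto j j (le_n j) Hj).
Qed.

Lemma dcoef_interior a K l j : (1 <= j <= K)%nat -> dcoef a K l j = rec a l j.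
Proof.
intro Hj. unfold dcoef, rec.
destruct (Nat.eqb_spec j 0); [lia|]. destruct (Nat.eqb_spec j (S K)); [lia|].
reflexivity.
Qed.

Lemma dcoef_last a K l : dcoef a K l (S K) = - a * l K + l (S K) - l (S (S K)).
Proof. unfold dcoef. simpl. rewrite Nat.eqb_refl. reflexivity. Qed.

Lemma prod_sin u v : 2 * (sin u * sin v) = cos (u - v) - cos (u + v).
Proof. rewrite cos_minus, cos_plus. ring. Qed.

(* e^{+-i w} are characteristic roots: the cosine identity behind the recurrence. *)
Lemma cos_recurrence a w p : 1 - a - 2 * a * cos w = 0 ->
  - a * cos (p + w) + cos p - cos (p - w) + a * cos (p - 2 * w) = 0.
Proof.
intro Hrel.
replace (p - 2 * w) with ((p - w) - w) by ring.
rewrite cos_plus, !cos_minus, sin_minus.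
pose proof (sin2_cos2 w) as Hpyth. unfold Rsqr in Hpyth.
transitivity ((1 - a - 2 * a * cos w) * (cos p * (1 - cos w) - sin p * sin w)
              + a * cos p * (1 - sin w * sin w - cos w * cos w)); [ring|].
rewrite Hrel. replace (1 - sin w * sin w - cos w * cos w) with 0 by lra. ring.
Qed.

Definition harmonic (c k phi w : R) (j : nat) : R := c + k * cos (phi - INR j * w).

Lemma harmonic_rec a w c k phi j : 1 - a - 2 * a * cos w = 0 -> (1 <= j)%nat ->
  rec a (harmonic c k phi w) j = 0.
Proof.
intros Hrel Hj. unfold rec, harmonic.
rewrite minus_INR by lia. change (INR 1) with 1. rewrite !S_INR.
set (p := phi - INR j * w).
replace (phi - (INR j - 1) * w) with (p + w) by (unfold p; ring).
replace (phi - (INR j + 1) * w) with (p - w) by (unfold p; ring).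
replace (phi - (INR j + 1 + 1) * w) with (p - 2 * w) by (unfold p; ring).
transitivity (k * (- a * cos (p + w) + cos p - cos (p - w) + a * cos (p - 2 * w))); [ring|].
rewrite (cos_recurrence a w p Hrel). ring.
Qed.

Lemma sin_half_pos (x : R) : 0 < x < 2 * PI -> 0 < sin (x / 2).
Proof. intro Hx. apply sin_gt_0; lra. Qed.

Lemma sin_half_neg (x : R) : 2 * PI < x < 4 * PI -> sin (x / 2) < 0.
Proof. intro Hx. apply sin_lt_0; lra. Qed.

Lemma sum_f_R0_pos (f : nat -> R) n :
  (forall i, (i <= n)%nat -> 0 < f i) -> 0 < sum_f_R0 f n.
Proof.
induction n as [|n IH]; intro Hf; simpl; [apply Hf; lia|].
pose proof (IH (fun i Hi => Hf i (Nat.le_le_succ_r _ _ Hi))).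
pose proof (Hf (S n) (le_n _)). lra.
Qed.

Definition lnum (w : R) (K j : nat) : R :=
  sin ((INR (K + 2) - INR j) / 2 * w) * sin (INR j * w / 2).

Lemma lsol_lnum w K j : lsol w K j = lnum w K j / Zc w K.
Proof. reflexivity. Qed.

Lemma Zc_lnum w K : Zc w K = sum_f_R0 (fun i => lnum w K (S i)) K.
Proof. reflexivity. Qed.

Lemma lnum_harmonic w K j :
  lnum w K j = harmonic (- cos (INR (K + 2) * w / 2) / 2) (1 / 2) (INR (K + 2) * w / 2) w j.
Proof.
unfold lnum, harmonic.
set (u := (INR (K + 2) - INR j) / 2 * w). set (v := INR j * w / 2).
replace (INR (K + 2) * w / 2 - INR j * w) with (u - v) by (unfold u, v; field).
replace (INR (K + 2) * w / 2) with (u + v) by (unfold u, v; field).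
pose proof (prod_sin u v). lra.
Qed.

Lemma lnum_0 w K : lnum w K 0 = 0.
Proof. unfold lnum. simpl INR. replace (0 * w / 2) with 0 by field. rewrite sin_0. ring. Qed.

Lemma lnum_end w K : lnum w K (K + 2) = 0.
Proof.
unfold lnum. replace ((INR (K + 2) - INR (K + 2)) / 2 * w) with 0 by field.
rewrite sin_0. ring.
Qed.

Lemma lnum_sym w K j : (j <= K + 2)%nat -> lnum w K (K + 2 - j) = lnum w K j.
Proof.
intro Hj. unfold lnum. rewrite minus_INR by lia.
replace ((INR (K + 2) - (INR (K + 2) - INR j)) / 2 * w) with (INR j * w / 2) by field.
replace ((INR (K + 2) - INR j) * w / 2) with ((INR (K + 2) - INR j) / 2 * w) by field.
ring.
Qed.

Lemma lnum_pos w K j : 0 < w -> INR (K + 1) * w < 2 * PI -> (1 <= j <= K + 1)%nat ->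
  0 < lnum w K j.
Proof.
intros Hw Hwidth Hj. unfold lnum.
assert (1 <= INR j) by (apply (le_INR 1); lia).
assert (INR j <= INR (K + 1)) by (apply le_INR; lia).
rewrite (plus_INR K 2) in *. rewrite (plus_INR K 1) in *. change (INR 2) with 2 in *.
change (INR 1) with 1 in *.
apply Rmult_lt_0_compat; apply sin_gt_0; nra.
Qed.

Definition start_mode (w : R) : nat -> R := harmonic (cos (w / 2)) (-1) (w / 2) w.

Lemma start_mode_0 w : start_mode w 0 = 0.
Proof. unfold start_mode, harmonic. simpl INR. replace (w / 2 - 0 * w) with (w / 2) by ring. ring. Qed.

Lemma start_mode_1 w : start_mode w 1 = 0.
Proof.
unfold start_mode, harmonic. change (INR 1) with 1.
replace (w / 2 - 1 * w) with (- (w / 2)) by field. rewrite cos_neg. ring.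
Qed.

Lemma start_mode_S w m :
  start_mode w (S m) = 2 * (sin (INR (S m) * w / 2) * sin (INR m * w / 2)).
Proof.
unfold start_mode, harmonic. rewrite prod_sin, S_INR.
replace (w / 2 - (INR m + 1) * w) with (- ((INR m + 1) * w / 2 + INR m * w / 2)) by field.
rewrite cos_neg. replace ((INR m + 1) * w / 2 - INR m * w / 2) with (w / 2) by field. ring.
Qed.

(* F_2 > 0, so a combination of the two modes can match any value at j = 2. *)
Lemma start_mode_2_pos w : 0 < w < PI -> 0 < start_mode w 2.
Proof.
intro Hw. rewrite start_mode_S. simpl INR.
pose proof (sin_half_pos (2 * w)). pose proof (sin_half_pos (1 * w)).
replace ((1 + 1) * w) with (2 * w) by ring. nra.
Qed.

Section ExplicitSolution.

Variables (K : nat) (a w : R).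
Hypothesis Ha : 0 < a.
Hypothesis Hcos : cos w = (1 - a) / (2 * a).
Hypothesis Hw : 0 < w < PI.
(* Keeps the multiples j w/2, 1 <= j <= K+1, inside (0, pi). *)
Hypothesis Hwidth : INR (K + 1) * w < 2 * PI.
(* Makes the second mode nonzero at j = K+2, which gives uniqueness. *)
Hypothesis Hend : sin (INR (K + 2) * w / 2) <> 0.

Lemma char_relation : 1 - a - 2 * a * cos w = 0.
Proof. rewrite Hcos. field. lra. Qed.

Lemma lnum_rec j : (1 <= j)%nat -> rec a (lnum w K) j = 0.
Proof.
intro Hj. unfold rec. rewrite !lnum_harmonic.
exact (harmonic_rec a w _ _ _ j char_relation Hj).
Qed.

Lemma Zc_pos : 0 < Zc w K.
Proof.
rewrite Zc_lnum. apply sum_f_R0_pos. intros i Hi.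
apply lnum_pos; [lra|exact Hwidth|lia].
Qed.

Lemma lsol_pos j : (1 <= j <= K + 1)%nat -> 0 < lsol w K j.
Proof.
intro Hj. rewrite lsol_lnum. apply Rdiv_lt_0_compat; [|exact Zc_pos].
apply lnum_pos; [lra|exact Hwidth|exact Hj].
Qed.

Lemma lsol_system : system_EK0 a K (lsol w K).
Proof.
pose proof Zc_pos as HZ.
split; [|split; [|split]].
- intros j Hj. rewrite dcoef_interior by exact Hj. unfold rec. rewrite !lsol_lnum.
  transitivity (rec a (lnum w K) j / Zc w K); [unfold rec; field; lra|].
  rewrite lnum_rec by lia. field. lra.
- rewrite lsol_lnum, lnum_0. field. lra.
- transitivity (/ Zc w K * Zc w K); [|field; lra].
  rewrite (Zc_lnum w K) at 2. rewrite scal_sum. apply sum_eq. intros i _.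
  rewrite lsol_lnum. unfold Rdiv. ring.
- rewrite lsol_lnum, lnum_end. field. lra.
Qed.

Lemma interior_solution_span (l : nat -> R) :
  (forall j, (1 <= j <= K)%nat -> dcoef a K l j = 0) -> l 0%nat = 0 ->
  exists t c, forall j, (j <= K + 2)%nat -> l j = t * lnum w K j + c * start_mode w j.
Proof.
intros Hrec H0.
assert (Hn1 : 0 < lnum w K 1) by (apply lnum_pos; [lra|exact Hwidth|lia]).
pose proof (start_mode_2_pos w Hw) as HF2.
set (t := l 1%nat / lnum w K 1).
set (c := (l 2%nat - t * lnum w K 2) / start_mode w 2).
exists t, c.
apply (rec_determined a K l (fun i => t * lnum w K i + c * start_mode w i)).
- lra.
- intros i Hi. rewrite <- (dcoef_interior a K) by exact Hi. exact (Hrec i Hi).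
- intros i Hi. rewrite rec_lin, lnum_rec by lia.
  unfold start_mode. rewrite harmonic_rec by (exact char_relation || lia). ring.
- rewrite H0, lnum_0, start_mode_0. ring.
- rewrite start_mode_1. unfold t. field. lra.
- unfold c. field. lra.
Qed.

Lemma start_mode_end : start_mode w (K + 2) <> 0.
Proof.
replace (K + 2)%nat with (S (K + 1)) by lia. rewrite start_mode_S.
replace (S (K + 1)) with (K + 2)%nat by lia.
assert (0 < sin (INR (K + 1) * w / 2)).
{ apply sin_half_pos. split; [|exact Hwidth].
  rewrite plus_INR. pose proof (pos_INR K). simpl INR. nra. }
intro Hz. apply Hend. nra.
Qed.

Lemma lsol_unique (l : nat -> R) : system_EK0 a K l ->
  forall j : nat, (j <= K + 2)%nat -> l j = lsol w K j.
Proof.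
intros [Hrec [H0 [Hsum Hlast]]].
pose proof Zc_pos as HZ.
destruct (interior_solution_span l Hrec H0) as [t [c Hspan]].
(* The end condition l_{K+2} = 0 kills the second mode. *)
assert (Hc0 : c = 0).
{ pose proof (Hspan (K + 2)%nat (le_n _)) as E.
  rewrite Hlast, lnum_end in E.
  apply (Rmult_eq_reg_r (start_mode w (K + 2))); [lra|exact start_mode_end]. }
(* The normalisation fixes t = 1 / Z. *)
assert (Ht : t * Zc w K = 1).
{ rewrite <- Hsum, Zc_lnum, scal_sum. apply sum_eq. intros i Hi.
  rewrite (Hspan (S i)) by lia. rewrite Hc0. ring. }
intros j Hj. rewrite (Hspan j Hj), Hc0, lsol_lnum.
replace t with (/ Zc w K) by (apply (Rmult_eq_reg_r (Zc w K)); [rewrite Ht, Rinv_l|]; lra).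
field. lra.
Qed.

Lemma lsol_d0_lnum :
  dcoef a K (lsol w K) 0 = (- lnum w K 1 + a * lnum w K 2) / Zc w K.
Proof. pose proof Zc_pos. unfold dcoef. simpl. rewrite !lsol_lnum, lnum_0. field. lra. Qed.

(* By the symmetry j <-> K+2-j of the numerator. *)
Lemma lsol_boundary_antisym :
  dcoef a K (lsol w K) 0 = - dcoef a K (lsol w K) (S K).
Proof.
pose proof Zc_pos.
rewrite lsol_d0_lnum, dcoef_last, !lsol_lnum.
rewrite <- (lnum_sym w K 2), <- (lnum_sym w K 1) by lia.
replace (S (S K)) with (K + 2)%nat by lia. rewrite lnum_end.
replace (K + 2 - 2)%nat with K by lia. replace (K + 2 - 1)%nat with (S K) by lia.
field. lra.
Qed.

(* The recurrence read at j = 0 evaluates d_0 in closed form. *)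
Lemma lsol_d0 : dcoef a K (lsol w K) 0 =
  - a * (sin (INR (K + 3) / 2 * w) * sin (w / 2)) / Zc w K.
Proof.
rewrite lsol_d0_lnum. f_equal.
set (theta := INR (K + 2) * w / 2).
assert (Hlnum : forall j, lnum w K j = (cos (theta - INR j * w) - cos theta) / 2).
{ intro j. rewrite lnum_harmonic. unfold harmonic, theta. field. }
rewrite !Hlnum. change (INR 1) with 1. change (INR 2) with 2.
replace (INR (K + 3) / 2 * w) with (theta + w / 2)
  by (unfold theta; rewrite !plus_INR; simpl INR; field).
pose proof (prod_sin (theta + w / 2) (w / 2)) as Hprod.
replace (theta + w / 2 - w / 2) with theta in Hprod by ring.
replace (theta + w / 2 + w / 2) with (theta + w) in Hprod by field.
pose proof (cos_recurrence a w theta char_relation) as Hrec.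
replace (theta - 1 * w) with (theta - w) by ring.
replace (sin (theta + w / 2) * sin (w / 2)) with ((cos theta - cos (theta + w)) / 2) by lra.
lra.
Qed.

Lemma lsol_d0_neg : 0 < sin (INR (K + 3) / 2 * w) -> dcoef a K (lsol w K) 0 < 0.
Proof.
intro Hs. rewrite lsol_d0. pose proof Zc_pos.
assert (0 < sin (w / 2)) by (apply sin_gt_0; lra).
replace (- a * (sin (INR (K + 3) / 2 * w) * sin (w / 2)) / Zc w K)
  with (- (a * (sin (INR (K + 3) / 2 * w) * sin (w / 2)) / Zc w K)) by (field; lra).
apply Ropp_lt_gt_0_contravar, Rdiv_lt_0_compat; [|lra].
apply Rmult_lt_0_compat; [lra|]. apply Rmult_lt_0_compat; lra.
Qed.

Lemma lsol_d0_pos : sin (INR (K + 3) / 2 * w) < 0 -> 0 < dcoef a K (lsol w K) 0.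
Proof.
intro Hs. rewrite lsol_d0. pose proof Zc_pos.
assert (0 < sin (w / 2)) by (apply sin_gt_0; lra).
apply Rdiv_lt_0_compat; [|lra].
replace (- a * (sin (INR (K + 3) / 2 * w) * sin (w / 2)))
  with (a * (- sin (INR (K + 3) / 2 * w) * sin (w / 2))) by ring.
apply Rmult_lt_0_compat; [lra|]. apply Rmult_lt_0_compat; lra.
Qed.

End ExplicitSolution.

Lemma alphaL_angle (L : nat) : (2 <= L)%nat ->
  0 < 2 * PI / (INR L + 2) <= PI / 2 /\ 0 <= cos (2 * PI / (INR L + 2)).
Proof.
intro HL. pose proof PI_RGT_0.
assert (2 <= INR L) by (apply (le_INR 2); lia).
assert (Hpos : 0 < 2 * PI / (INR L + 2)) by (apply Rdiv_lt_0_compat; lra).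
assert (Hle : 2 * PI / (INR L + 2) <= PI / 2).
{ apply (Rmult_le_reg_r (INR L + 2)); [lra|]. field_simplify; nra. }
split; [lra|]. apply cos_ge_0; lra.
Qed.

Lemma alphaL_pos (L : nat) : (2 <= L)%nat -> 0 < alphaL L.
Proof.
intro HL. destruct (alphaL_angle L HL) as [_ Hc].
unfold alphaL. rewrite plus_INR. change (INR 2) with 2.
apply Rdiv_lt_0_compat; lra.
Qed.

(* Since cos w = (1 - a)/(2a) decreases in a > 0 while cos decreases on [0, pi],
   comparing a with alpha_L compares w with 2 pi/(L+2). *)
Lemma angle_vs_alphaL (L : nat) (a w : R) : (2 <= L)%nat -> 0 < a ->
  0 < w < PI -> cos w = (1 - a) / (2 * a) ->
  (alphaL L < a -> 2 * PI < w * (INR L + 2)) /\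
  (a < alphaL L -> w * (INR L + 2) < 2 * PI) /\
  (a = alphaL L -> w * (INR L + 2) = 2 * PI).
Proof.
intros HL Ha Hw Hc. pose proof PI_RGT_0.
assert (2 <= INR L) by (apply (le_INR 2); lia).
destruct (alphaL_angle L HL) as [Hu Hcu].
unfold alphaL. rewrite plus_INR. change (INR 2) with 2.
set (u := 2 * PI / (INR L + 2)) in *.
assert (Hmul : u * (INR L + 2) = 2 * PI) by (unfold u; field; lra).
assert (Hdiff : cos w - cos u = (1 - a * (1 + 2 * cos u)) / (2 * a)) by (rewrite Hc; field; lra).
set (b := 1 + 2 * cos u) in *.
assert (Hb : 0 < b) by (unfold b; lra).
split; [|split]; intro h.
- assert (Hab : 1 < a * b).
  { apply (Rmult_lt_compat_r b) in h; [|exact Hb]. field_simplify in h; lra. }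
  assert (u < w).
  { apply cos_decreasing_0; try lra.
    apply Rminus_lt. rewrite Hdiff. apply Rdiv_neg_pos; lra. }
  nra.
- assert (Hab : a * b < 1).
  { apply (Rmult_lt_compat_r b) in h; [|exact Hb]. field_simplify in h; lra. }
  assert (w < u).
  { apply cos_decreasing_0; try lra.
    apply Rminus_gt. rewrite Hdiff. apply Rdiv_lt_0_compat; lra. }
  nra.
- replace w with u; [exact Hmul|].
  apply cos_inj; try lra. symmetry. apply Rminus_diag_uniq.
  rewrite Hdiff, h. field. lra.
Qed.

Lemma band_angle (L : nat) (a w : R) : (1 <= L)%nat -> alpha_band L a ->
  0 < w < PI -> cos w = (1 - a) / (2 * a) ->
  0 < a /\ 2 * PI < w * (INR L + 3) /\ w * (INR L + 2) < 2 * PI.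
Proof.
intros HL [Hlo Hhi] Hw Hc.
assert (Ha : 0 < a) by (pose proof (alphaL_pos (S L) ltac:(lia)); lra).
destruct (angle_vs_alphaL (S L) a w ltac:(lia) Ha Hw Hc) as [Hbelow _].
rewrite S_INR in Hbelow. specialize (Hbelow Hlo).
split; [exact Ha|split; [lra|]].
destruct (Nat.le_gt_cases 2 L) as [h|h].
- destruct (angle_vs_alphaL L a w h Ha Hw Hc) as [_ [Habove _]].
  exact (Habove (Hhi h)).
- (* L = 1: alpha_1 = +oo, and a > 0 alone gives cos w > -1/2 = cos(2 pi/3). *)
  replace L with 1%nat by lia. simpl INR. pose proof PI_RGT_0.
  assert (Hc3 : cos (2 * PI / 3) = - (1 / 2)).
  { replace (2 * PI / 3) with (PI - PI / 3) by field.
    rewrite Rtrigo_facts.cos_pi_minus, cos_PI3. ring. }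
  assert (- (1 / 2) < cos w) by (rewrite Hc; apply (Rmult_lt_reg_r (2 * a)); [lra|]; field_simplify; lra).
  assert (w < 2 * PI / 3) by (apply cos_decreasing_0; lra).
  lra.
Qed.

Lemma band_conditions (L K : nat) (a w : R) :
  (1 <= L)%nat -> alpha_band L a -> (K <= L + 1)%nat ->
  0 < w < PI -> cos w = (1 - a) / (2 * a) ->
  0 < a /\ INR (K + 1) * w < 2 * PI /\ sin (INR (K + 2) * w / 2) <> 0 /\
  ((K <= L - 1)%nat -> 0 < sin (INR (K + 3) / 2 * w)) /\
  ((L <= K)%nat -> sin (INR (K + 3) / 2 * w) < 0).
Proof.
intros HL Hb HK Hw Hc.
destruct (band_angle L a w HL Hb Hw Hc) as [Ha [Hlo Hhi]].
assert (HKL : INR K <= INR L + 1) by (rewrite <- S_INR; apply le_INR; lia).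
pose proof (pos_INR K).
replace (INR (K + 3) / 2 * w) with (INR (K + 3) * w / 2) by field.
rewrite !plus_INR. simpl INR.
split; [exact Ha|split; [nra|split; [|split]]].
- destruct (Nat.le_gt_cases K L) as [h|h].
  + assert (INR K <= INR L) by (apply le_INR; exact h).
    apply Rgt_not_eq, sin_half_pos. nra.
  + replace K with (S L) by lia. rewrite S_INR.
    apply Rlt_not_eq, sin_half_neg. nra.
- intro h. assert (INR K + 1 <= INR L) by (rewrite <- S_INR; apply le_INR; lia).
  apply sin_half_pos. nra.
- intro h. assert (INR L <= INR K) by (apply le_INR; exact h).
  apply sin_half_neg. nra.
Qed.

Lemma critical_conditions (L K : nat) (a w : R) :
  a = alphaL L -> (1 <= K <= L - 1)%nat ->
  0 < w < PI -> cos w = (1 - a) / (2 * a) ->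
  0 < a /\ INR (K + 1) * w < 2 * PI /\ sin (INR (K + 2) * w / 2) <> 0.
Proof.
intros Ha HK Hw Hc.
assert (Hapos : 0 < a) by (rewrite Ha; apply alphaL_pos; lia).
destruct (angle_vs_alphaL L a w ltac:(lia) Hapos Hw Hc) as [_ [_ Hcrit]].
specialize (Hcrit Ha).
assert (HKL : INR K + 1 <= INR L) by (rewrite <- S_INR; apply le_INR; lia).
pose proof (pos_INR K).
rewrite !plus_INR. simpl INR.
split; [exact Hapos|split; [nra|]].
apply Rgt_not_eq, sin_half_pos. nra.
Qed.

Theorem mainTheorem8 :
  (forall (L K : nat) (a w : R),
     (1 <= L)%nat -> alpha_band L a -> (K <= L + 1)%nat ->
     0 < w < PI -> cos w = (1 - a) / (2 * a) ->
     system_EK0 a K (lsol w K) /\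
     (forall l : nat -> R, system_EK0 a K l ->
        forall j : nat, (j <= K + 2)%nat -> l j = lsol w K j) /\
     dcoef a K (lsol w K) 0 = - dcoef a K (lsol w K) (S K) /\
     dcoef a K (lsol w K) 0 =
       - a * (sin (INR (K + 3) / 2 * w) * sin (w / 2)) / Zc w K /\
     (forall j : nat, (1 <= j <= K + 1)%nat -> 0 < lsol w K j) /\
     ((K <= L - 1)%nat -> dcoef a K (lsol w K) 0 < 0) /\
     ((L <= K)%nat -> 0 < dcoef a K (lsol w K) 0))
  /\
  (forall (L K : nat) (a w : R),
     (1 <= L)%nat -> a = alphaL L -> (1 <= K <= L - 1)%nat ->
     0 < w < PI -> cos w = (1 - a) / (2 * a) ->
     system_EK0 a K (lsol w K) /\
     (forall l : nat -> R, system_EK0 a K l ->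
        forall j : nat, (j <= K + 2)%nat -> l j = lsol w K j) /\
     dcoef a K (lsol w K) 0 = - dcoef a K (lsol w K) (S K) /\
     dcoef a K (lsol w K) 0 =
       - a * (sin (INR (K + 3) / 2 * w) * sin (w / 2)) / Zc w K).
Proof.
split.
- intros L K a w HL Hb HK Hw Hc.
  destruct (band_conditions L K a w HL Hb HK Hw Hc)
    as [Ha [Hwidth [Hend [Hlow Hhigh]]]].
  refine (conj _ (conj _ (conj _ (conj _ (conj _ (conj _ _)))))).
  + apply lsol_system; assumption.
  + apply lsol_unique; assumption.
  + apply lsol_boundary_antisym; assumption.
  + apply lsol_d0; assumption.
  + apply lsol_pos; assumption.
  + intro h. apply lsol_d0_neg; [assumption..|exact (Hlow h)].
  + intro h. apply lsol_d0_pos; [assumption..|exact (Hhigh h)].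
- intros L K a w _ Ha HK Hw Hc.
  destruct (critical_conditions L K a w Ha HK Hw Hc) as [Hapos [Hwidth Hend]].
  refine (conj _ (conj _ (conj _ _))).
  + apply lsol_system; assumption.
  + apply lsol_unique; assumption.
  + apply lsol_boundary_antisym; assumption.
  + apply lsol_d0; assumption.
Qed.
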